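(* Let $\lambda\in\mathbb{C}$ with $|\lambda|>1$, and let $g,h\in \mathrm{SL}(2,\mathbb{C})$ be $$g=\begin{pmatrix}\lambda&0\\0&\lambda^{-1}\end{pmatrix},\qquad h=\begin{pmatrix}a&b\\c&d\end{pmatrix}.$$ Put $M_g=|\lambda-1|+|\lambda^{-1}-1|$ and suppose $M_g<1$. If $$|abcd|^{1/2}\le \frac{1-M_g}{M_g^2},$$ then the subgroup $\langle g,h\rangle$ is either elementary or not discrete.
   Context: A subgroup of $\mathrm{SL}(2,\mathbb{C})$ is discrete if it is discrete in the matrix topology. It is elementary if its action on $\mathbb{H}^3\cup\partial\mathbb{H}^3$ (via Möbius transformations) has a finite orbit; otherwise it is non-elementary. Since $|\lambda|>1$, $g$ is loxodromic. *)

From Stdlib Require Import Reals List.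
Open Scope R_scope.

Record Cx : Type := mkC { Re : R; Im : R }.

Definition Czero : Cx := mkC 0 0.
Definition Cone : Cx := mkC 1 0.
Definition Cadd (z w : Cx) : Cx := mkC (Re z + Re w) (Im z + Im w).
Definition Copp (z : Cx) : Cx := mkC (- Re z) (- Im z).
Definition Csub (z w : Cx) : Cx := Cadd z (Copp w).
Definition Cmul (z w : Cx) : Cx :=
  mkC (Re z * Re w - Im z * Im w) (Re z * Im w + Im z * Re w).
Definition Cconj (z : Cx) : Cx := mkC (Re z) (- Im z).
Definition Cnorm2 (z : Cx) : R := Re z * Re z + Im z * Im z.
Definition Cabs (z : Cx) : R := sqrt (Cnorm2 z).
Definition Cscale (r : R) (z : Cx) : Cx := mkC (r * Re z) (r * Im z).
Definition Cinv (z : Cx) : Cx := Cscale (/ Cnorm2 z) (Cconj z).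
Definition Cdiv (z w : Cx) : Cx := Cmul z (Cinv w).
Definition RtoC (r : R) : Cx := mkC r 0.

Definition Ceq_dec (z w : Cx) : {z = w} + {z <> w}.
Proof.
  destruct z as [x y], w as [x' y'].
  destruct (Req_EM_T x x') as [e1|n1]; [destruct (Req_EM_T y y') as [e2|n2]|].
  - left; subst; reflexivity.
  - right; intros H; inversion H; contradiction.
  - right; intros H; inversion H; contradiction.
Defined.

(** 2x2 complex matrices [[ma, mb], [mc, md]]. *)
Record Mat : Type := mkM { ma : Cx; mb : Cx; mc : Cx; md : Cx }.

Definition Mid : Mat := mkM Cone Czero Czero Cone.
Definition Mmul (x y : Mat) : Mat :=
  mkM (Cadd (Cmul (ma x) (ma y)) (Cmul (mb x) (mc y)))
      (Cadd (Cmul (ma x) (mb y)) (Cmul (mb x) (md y)))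
      (Cadd (Cmul (mc x) (ma y)) (Cmul (md x) (mc y)))
      (Cadd (Cmul (mc x) (mb y)) (Cmul (md x) (md y))).
Definition Mdet (x : Mat) : Cx := Csub (Cmul (ma x) (md x)) (Cmul (mb x) (mc x)).
Definition Minv (x : Mat) : Mat :=
  let k := Cinv (Mdet x) in
  mkM (Cmul k (md x)) (Cmul k (Copp (mb x))) (Cmul k (Copp (mc x))) (Cmul k (ma x)).

Definition Mdist (x y : Mat) : R :=
  sqrt (Cnorm2 (Csub (ma x) (ma y)) + Cnorm2 (Csub (mb x) (mb y))
        + Cnorm2 (Csub (mc x) (mc y)) + Cnorm2 (Csub (md x) (md y))).

Inductive gen2 (g h : Mat) : Mat -> Prop :=
| gen2_id : gen2 g h Mid
| gen2_g : gen2 g h g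
| gen2_h : gen2 g h h
| gen2_ginv : gen2 g h (Minv g)
| gen2_hinv : gen2 g h (Minv h)
| gen2_mul : forall x y, gen2 g h x -> gen2 g h y -> gen2 g h (Mmul x y).

Definition discrete (G : Mat -> Prop) : Prop :=
  forall x, G x -> exists eps, 0 < eps /\
    forall y, G y -> Mdist x y < eps -> y = x.

(** Points of H^3 ∪ ∂H^3, upper half-space model:
    [Hyp z t] is z + t j with t > 0, [Bd z] a finite boundary point, [Inf] = ∞. *)
Inductive Pt : Type :=
| Hyp (z : Cx) (t : R)
| Bd (z : Cx)
| Inf.

Definition valid_pt (p : Pt) : Prop :=
  match p with Hyp _ t => 0 < t | _ => True end.

(** Action of an element of SL(2,Cx) by Möbius transformations (Poincaré extension). *)
Definition act (m : Mat) (p : Pt) : Pt :=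
  let a := ma m in let b := mb m in let c := mc m in let d := md m in
  match p with
  | Inf => if Ceq_dec c Czero then Inf else Bd (Cdiv a c)
  | Bd z =>
      let den := Cadd (Cmul c z) d in
      if Ceq_dec den Czero then Inf else Bd (Cdiv (Cadd (Cmul a z) b) den)
  | Hyp z t =>
      let w := Cadd (Cmul c z) d in
      let D := Cnorm2 w + Cnorm2 c * (t * t) in
      Hyp (Cscale (/ D) (Cadd (Cmul (Cadd (Cmul a z) b) (Cconj w))
                              (Cscale (t * t) (Cmul a (Cconj c)))))
          (t / D)
  end.

Definition elementary (G : Mat -> Prop) : Prop :=
  exists p, valid_pt p /\
    exists l : list Pt, forall x, G x -> In (act x p) l.

From Pilot Require Import Defs.
From Stdlib Require Import Reals List Lra Psatz Classical.
From Coquelicot Require Import Coquelicot.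
Import Defs.
Open Scope R_scope.

(* Let [g = diag(λ, 1/λ)], [h_0 = h] and [h_{n+1} = h_n g h_n^{-1}].  The product [x_n] of
   the off-diagonal entries of [h_n] obeys [x_{n+1} = - x_n (1 + x_n) τ²] with [τ = λ - 1/λ],
   and [|τ| ≤ M_g]; since [x_0 (1 + x_0) = abcd], the hypothesis gives [|τ|² (1 + |x_1|) < 1],
   so [x_n -> 0] geometrically while the diagonal entries of [h_{n+1}] tend to [λ] and [1/λ].
   In a discrete group no [x_n] vanishes: otherwise some [h_n] is triangular with a nonzero
   corner, the quotient of [h_n] by its conjugate under [g] is a nontrivial parabolic element,
   and the conjugates of that element by powers of [g] accumulate at the identity.  Conjugating
   [h_{n+1}] by the power of [g] that balances its two off-diagonal entries then yields
   elements [≠ g] converging to [g].  When [b = 0], [c = 0] or [a = d = 0] the group fixes [0]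
   or [∞], or preserves [{0, ∞}], so it is elementary. *)

Lemma sqrt_plus_le p q : 0 <= p -> 0 <= q -> sqrt (p + q) <= sqrt p + sqrt q.
Proof.
  intros Hp Hq; pose proof (sqrt_pos p); pose proof (sqrt_pos q).
  rewrite <- (sqrt_square (sqrt p + sqrt q)) by lra; apply sqrt_le_1_alt.
  pose proof (sqrt_sqrt p Hp); pose proof (sqrt_sqrt q Hq); nra.
Qed.

Lemma exists_pow_mul_lt (r K eps : R) : 0 <= r < 1 -> 0 < eps -> exists n, r ^ n * K < eps.
Proof.
  intros Hr Heps; pose proof (Rabs_pos K); pose proof (Rle_abs K).
  destruct (pow_lt_1_zero r ltac:(rewrite Rabs_pos_eq; lra) (eps / (Rabs K + 1)))
    as [N HN]; [apply Rdiv_lt_0_compat; lra|].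
  exists N; specialize (HN N (le_n N)); rewrite Rabs_pos_eq in HN by (apply pow_le; lra).
  pose proof (pow_le r N ltac:(lra)).
  apply Rmult_lt_compat_r with (r := Rabs K + 1) in HN; [|lra].
  unfold Rdiv in HN; rewrite Rmult_assoc, Rinv_l in HN by lra; nra.
Qed.

Lemma exists_crossing (P : nat -> Prop) N : ~ P O -> P N -> exists j, ~ P j /\ P (S j).
Proof.
  intros P0; induction N as [|N IH]; intros PN; [contradiction|].
  destruct (classic (P N)) as [PN' | PN']; [now apply IH | now exists N].
Qed.

Lemma exists_pow_bracket (rho q : R) : 1 < rho -> 0 < q -> exists j : nat,
  (q * rho ^ j <= 1 < rho * (q * rho ^ j)) \/ (q / rho ^ j <= 1 < rho * (q / rho ^ j)).
Proof.
  intros rho_gt1 q_pos.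
  assert (unbounded : forall K, exists N, K < rho ^ N).
  { intros K; destruct (Pow_x_infinity rho ltac:(rewrite Rabs_pos_eq; lra) (K + 1)) as [N HN].
    exists N; specialize (HN N (le_n N)); rewrite Rabs_pos_eq in HN by (apply pow_le; lra).
    lra. }
  destruct (Rle_lt_dec q 1) as [q_le1 | q_gt1].
  - destruct (unbounded (/ q)) as [N HN].
    destruct (exists_crossing (fun j => 1 < q * rho ^ j) N) as [j [Hj HSj]].
    + simpl; lra.
    + apply (Rmult_lt_compat_l q) in HN; [rewrite Rinv_r in HN; lra | exact q_pos].
    + exists j; left; simpl in HSj; split; lra.
  - destruct (unbounded q) as [N HN].
    pose proof (pow_lt rho N ltac:(lra)) as rhoN_pos.
    destruct (exists_crossing (fun j => q / rho ^ j <= 1) N) as [j [Hj HSj]].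
    + simpl; unfold Rdiv; rewrite Rinv_1; lra.
    + apply Rmult_le_reg_r with (rho ^ N); [exact rhoN_pos|].
      unfold Rdiv; rewrite Rmult_assoc, Rinv_l; lra.
    + exists (S j); right; split; [exact HSj|].
      pose proof (pow_lt rho j ltac:(lra)).
      replace (rho * (q / rho ^ S j)) with (q / rho ^ j) by (simpl; field; lra); lra.
Qed.

Lemma quadratic_recursion_decay (y : nat -> R) (t : R) :
  (forall k, 0 <= y k) -> (forall k, y (S k) <= t * y k * (1 + y k)) ->
  0 <= t -> t * (1 + y O) < 1 -> forall k, y k <= (t * (1 + y O)) ^ k * y O.
Proof.
  intros y_ge0 rec t_ge0 r_lt1; set (r := t * (1 + y O)) in *.
  pose proof (y_ge0 O); assert (r_ge0 : 0 <= r) by (unfold r; nra).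
  induction k as [|k IH]; simpl; [lra|].
  assert (rk : r ^ k <= 1) by (rewrite <- (pow1 k); apply pow_incr; lra).
  pose proof (pow_le r k r_ge0); pose proof (rec k); pose proof (y_ge0 k).
  assert (yk : y k <= y O) by nra.
  assert (0 <= t * y k * (y O - y k)) by (apply Rmult_le_pos; [apply Rmult_le_pos|]; lra).
  assert (r * y k <= r * (r ^ k * y O)) by (apply Rmult_le_compat_l; lra).
  unfold r in *; nra.
Qed.

Lemma ratio_bracket (X Y rho : R) : 0 < Y -> X / Y <= 1 < rho * (X / Y) -> X <= Y < rho * X.
Proof.
  intros Y_pos [H1 H2]; assert (HX : X = X / Y * Y) by (field; lra).
  generalize dependent (X / Y); intros Z H1 H2 HX; subst X; split; nra.
Qed.

Lemma balanced_sum_lt (p q rho eta : R) : 0 <= p -> p <= q < rho * p -> 1 <= rho ->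
  0 < eta -> p * q < eta * eta -> p + q < (1 + rho) * eta.
Proof. intros p_ge0 [pq qp] rho_ge1 eta_pos Hpq; assert (p < eta) by nra; nra. Qed.

Lemma contraction_bound (t M s : R) : 0 < t <= M -> M < 1 -> 0 <= s ->
  s <= (1 - M) / (M * M) -> t * t * (1 + s * s * (t * t)) < 1.
Proof.
  intros [t_pos t_le] M_lt1 s_ge0 Hs.
  assert (sM : s * (M * M) <= 1 - M).
  { apply (Rmult_le_compat_r (M * M)) in Hs; [|nra].
    unfold Rdiv in Hs; rewrite Rmult_assoc, Rinv_l in Hs by nra; lra. }
  assert (tt : t * t <= M * M) by nra.
  assert (st : s * (t * t) <= 1 - M)
    by (eapply Rle_trans; [apply Rmult_le_compat_l; eassumption | exact sM]).
  assert (0 <= s * (t * t)) by nra.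
  assert ((s * (t * t)) * (s * (t * t)) <= (1 - M) * (1 - M)) by nra.
  nra.
Qed.

(* [Cx] is transported to Coquelicot's [C], where [ring] and [field] are available. *)

Definition toC (z : Cx) : C := (Re z, Im z).
Definition ofC (z : C) : Cx := mkC (fst z) (snd z).

Lemma toC_ofC z : toC (ofC z) = z.
Proof. now destruct z. Qed.

Lemma toC_inj z w : toC z = toC w -> z = w.
Proof. destruct z, w; unfold toC; simpl; intros E; now inversion E. Qed.

Lemma toC_eq0 z : toC z = 0%C -> z = Czero.
Proof. intros E; now apply toC_inj. Qed.

Lemma toC_Czero : toC Czero = 0%C.
Proof. reflexivity. Qed.

Lemma toC_add z w : toC (Cadd z w) = (toC z + toC w)%C.
Proof. now destruct z, w. Qed.

Lemma toC_mul z w : toC (Cmul z w) = (toC z * toC w)%C.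
Proof. now destruct z, w. Qed.

Lemma toC_opp z : toC (Copp z) = (- toC z)%C.
Proof. now destruct z. Qed.

Lemma toC_sub z w : toC (Csub z w) = (toC z - toC w)%C.
Proof. now destruct z, w. Qed.

Lemma toC_inv z : toC (Cinv z) = (/ toC z)%C.
Proof.
  destruct z as [x y]; unfold toC, Defs.Cinv, Cscale, Cconj, Cnorm2, Complex.Cinv; simpl.
  replace (x * (x * 1) + y * (y * 1)) with (x * x + y * y) by ring.
  unfold Rdiv; f_equal; ring.
Qed.

Lemma toC_div z w : toC (Cdiv z w) = (toC z / toC w)%C.
Proof. unfold Cdiv; now rewrite toC_mul, toC_inv. Qed.

Lemma Cabs_Cmod z : Cabs z = Cmod (toC z).
Proof. destruct z as [x y]; unfold Cabs, Cmod, Cnorm2, toC; simpl; f_equal; ring. Qed.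

Lemma Cmod_0_sub (z : C) : Cmod (0 - z) = Cmod z.
Proof. rewrite <- Cmod_opp; f_equal; ring. Qed.

Lemma Cmul_self_neq1 (z : C) : Cmod z <> 1 -> (z * z)%C <> 1%C.
Proof.
  intros Hz E; apply Hz; pose proof (Cmod_ge_0 z).
  assert (Hzz : Cmod (z * z) = 1) by (rewrite E; apply Cmod_1).
  rewrite Cmod_mult in Hzz; nra.
Qed.

Lemma Cinv_neq0 (z : C) : z <> 0%C -> (/ z)%C <> 0%C.
Proof. intros Hz E; apply C1_nz; rewrite <- (Cinv_l z Hz), E; ring. Qed.

Lemma Copp_neq0 (z : C) : z <> 0%C -> (- z)%C <> 0%C.
Proof. intros Hz E; apply Hz; replace z with (- - z)%C by ring; rewrite E; ring. Qed.

Lemma Cmod_sub_le_sub1 (z w : C) : Cmod (z - w) <= Cmod (z - 1) + Cmod (w - 1).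
Proof.
  replace (z - w)%C with ((z - 1) + - (w - 1))%C by ring.
  rewrite <- (Cmod_opp (w - 1)); apply Cmod_triangle.
Qed.

Lemma neq0_of_Cmod_gt1 (z : C) : 1 < Cmod z -> z <> 0%C.
Proof. intros Hz E; rewrite E, Cmod_0 in Hz; lra. Qed.

Lemma sub_inv_neq0 (L : C) : 1 < Cmod L -> (L - / L)%C <> 0%C.
Proof.
  intros HL E; pose proof (neq0_of_Cmod_gt1 L HL).
  apply (Cmul_self_neq1 L); [lra|].
  replace (L * L)%C with (L * (L - / L) + 1)%C by (field; auto); rewrite E; ring.
Qed.

Lemma add_inv_neq0 (L : C) : 1 < Cmod L -> (L + / L)%C <> 0%C.
Proof.
  intros HL E; pose proof (neq0_of_Cmod_gt1 L HL).
  assert (LL : Cmod (L * L) = 1).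
  { replace (L * L)%C with (- (1 - L * (L + / L)))%C by (field; auto).
    rewrite E, Cmod_opp; replace (1 - L * 0)%C with (1 : C) by ring; apply Cmod_1. }
  rewrite Cmod_mult in LL; nra.
Qed.

Definition ca (m : Mat) : C := toC (ma m).
Definition cb (m : Mat) : C := toC (mb m).
Definition cc (m : Mat) : C := toC (mc m).
Definition cd (m : Mat) : C := toC (md m).
Definition mkMC (a b c d : C) : Mat := mkM (ofC a) (ofC b) (ofC c) (ofC d).
Definition detC (m : Mat) : C := (ca m * cd m - cb m * cc m)%C.

Lemma Mat_ext x y : ca x = ca y -> cb x = cb y -> cc x = cc y -> cd x = cd y -> x = y.
Proof. destruct x, y; unfold ca, cb, cc, cd; simpl; intros; f_equal; now apply toC_inj. Qed.

Lemma detC_Mdet x : toC (Mdet x) = detC x.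
Proof. unfold Mdet, detC; now rewrite toC_sub, !toC_mul. Qed.

Lemma ca_mkMC a b c d : ca (mkMC a b c d) = a. Proof. apply toC_ofC. Qed.
Lemma cb_mkMC a b c d : cb (mkMC a b c d) = b. Proof. apply toC_ofC. Qed.
Lemma cc_mkMC a b c d : cc (mkMC a b c d) = c. Proof. apply toC_ofC. Qed.
Lemma cd_mkMC a b c d : cd (mkMC a b c d) = d. Proof. apply toC_ofC. Qed.

Lemma ca_Mmul x y : ca (Mmul x y) = (ca x * ca y + cb x * cc y)%C.
Proof. unfold ca, cb, cc; simpl; now rewrite toC_add, !toC_mul. Qed.
Lemma cb_Mmul x y : cb (Mmul x y) = (ca x * cb y + cb x * cd y)%C.
Proof. unfold ca, cb, cd; simpl; now rewrite toC_add, !toC_mul. Qed.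
Lemma cc_Mmul x y : cc (Mmul x y) = (cc x * ca y + cd x * cc y)%C.
Proof. unfold ca, cc, cd; simpl; now rewrite toC_add, !toC_mul. Qed.
Lemma cd_Mmul x y : cd (Mmul x y) = (cc x * cb y + cd x * cd y)%C.
Proof. unfold cb, cc, cd; simpl; now rewrite toC_add, !toC_mul. Qed.

Lemma ca_Minv x : ca (Minv x) = (/ detC x * cd x)%C.
Proof. unfold ca, Minv; simpl; now rewrite toC_mul, toC_inv, detC_Mdet. Qed.
Lemma cb_Minv x : cb (Minv x) = (/ detC x * - cb x)%C.
Proof. unfold cb, Minv; simpl; now rewrite toC_mul, toC_inv, detC_Mdet, toC_opp. Qed.
Lemma cc_Minv x : cc (Minv x) = (/ detC x * - cc x)%C.
Proof. unfold cc, Minv; simpl; now rewrite toC_mul, toC_inv, detC_Mdet, toC_opp. Qed.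
Lemma cd_Minv x : cd (Minv x) = (/ detC x * ca x)%C.
Proof. unfold cd, Minv; simpl; now rewrite toC_mul, toC_inv, detC_Mdet. Qed.

Lemma ca_Mid : ca Mid = 1%C. Proof. reflexivity. Qed.
Lemma cb_Mid : cb Mid = 0%C. Proof. reflexivity. Qed.
Lemma cc_Mid : cc Mid = 0%C. Proof. reflexivity. Qed.
Lemma cd_Mid : cd Mid = 1%C. Proof. reflexivity. Qed.

Ltac simpl_entries :=
  repeat rewrite ?ca_mkMC, ?cb_mkMC, ?cc_mkMC, ?cd_mkMC, ?ca_Mmul, ?cb_Mmul, ?cc_Mmul,
    ?cd_Mmul, ?ca_Minv, ?cb_Minv, ?cc_Minv, ?cd_Minv, ?ca_Mid, ?cb_Mid, ?cc_Mid, ?cd_Mid.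

Lemma detC_Mmul x y : detC (Mmul x y) = (detC x * detC y)%C.
Proof. unfold detC; simpl_entries; ring. Qed.

Lemma detC_Minv x : detC x = 1%C -> detC (Minv x) = 1%C.
Proof.
  intros Hx; unfold detC at 1; simpl_entries; rewrite Hx.
  transitivity (detC x); [unfold detC; field | exact Hx].
Qed.

Lemma Minv_involutive x : detC x = 1%C -> Minv (Minv x) = x.
Proof. intros Hx; apply Mat_ext; simpl_entries; rewrite (detC_Minv x Hx), Hx; field. Qed.

Lemma Minv_Mmul x y : detC x = 1%C -> detC y = 1%C -> Minv (Mmul x y) = Mmul (Minv y) (Minv x).
Proof. intros Hx Hy; apply Mat_ext; simpl_entries; rewrite detC_Mmul, Hx, Hy; field. Qed.

Lemma Minv_Mid : Minv Mid = Mid.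
Proof.
  assert (H : detC Mid = 1%C) by (unfold detC; simpl_entries; ring).
  apply Mat_ext; simpl_entries; rewrite H; field.
Qed.

Lemma gen2_closed (g h : Mat) (P : Mat -> Prop) :
  P Mid -> P g -> P h -> (forall x, P x -> P (Minv x)) ->
  (forall x y, P x -> P y -> P (Mmul x y)) -> forall x, gen2 g h x -> P x.
Proof. intros P1 Pg Ph Pinv Pmul x Hx; induction Hx; auto. Qed.

Section Generated.

Variables g h : Mat.
Hypothesis g_det : detC g = 1%C.
Hypothesis h_det : detC h = 1%C.

Lemma gen2_detC x : gen2 g h x -> detC x = 1%C.
Proof.
  apply (gen2_closed g h (fun x => detC x = 1%C)); auto.
  - unfold detC; simpl_entries; ring.
  - apply detC_Minv.
  - intros x1 x2 H1 H2; rewrite detC_Mmul, H1, H2; ring.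
Qed.

Lemma gen2_Minv x : gen2 g h x -> gen2 g h (Minv x).
Proof.
  induction 1.
  - rewrite Minv_Mid; constructor.
  - constructor.
  - constructor.
  - rewrite Minv_involutive by exact g_det; constructor.
  - rewrite Minv_involutive by exact h_det; constructor.
  - rewrite Minv_Mmul by (apply gen2_detC; assumption); now constructor.
Qed.

End Generated.

Definition diag (m : C) : Mat := mkMC m 0 0 (/ m).

Lemma detC_diag (m : C) : m <> 0%C -> detC (diag m) = 1%C.
Proof. intros Hm; unfold detC, diag; simpl_entries; now field. Qed.

Lemma Minv_diag (m : C) : m <> 0%C -> Minv (diag m) = diag (/ m).
Proof.
  intros Hm; apply Mat_ext; simpl_entries; rewrite (detC_diag m Hm); unfold diag; simpl_entries;
    field; auto.
Qed.

Definition rescale (m : C) (f : Mat) : Mat :=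
  mkMC (ca f) (m * m * cb f) (cc f / (m * m)) (cd f).

Lemma diag_conj (m : C) f : m <> 0%C -> Mmul (Mmul (diag m) f) (Minv (diag m)) = rescale m f.
Proof.
  intros Hm; rewrite Minv_diag by exact Hm.
  apply Mat_ext; unfold rescale, diag; simpl_entries; field; auto.
Qed.

Lemma diag_Cpow_S (m : C) n : m <> 0%C -> diag (m ^ S n)%C = Mmul (diag m) (diag (m ^ n)%C).
Proof.
  intros Hm; pose proof (Cpow_nz m n Hm).
  apply Mat_ext; unfold diag; simpl_entries; rewrite ?Cpow_S; field; auto.
Qed.

Lemma rescale_upper_unipotent (m gam : C) :
  rescale m (mkMC 1 gam 0 1) = mkMC 1 (m * m * gam) 0 1.
Proof. apply Mat_ext; unfold rescale; simpl_entries; auto; apply Cmult_0_l. Qed.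

Lemma rescale_lower_unipotent (m gam : C) :
  rescale m (mkMC 1 0 gam 1) = mkMC 1 0 (gam / (m * m)) 1.
Proof. apply Mat_ext; unfold rescale; simpl_entries; auto; ring. Qed.

Lemma detC_rescale (m : C) f : m <> 0%C -> detC (rescale m f) = detC f.
Proof. intros Hm; unfold detC, rescale; simpl_entries; field; auto. Qed.

Lemma Mdist_le x y :
  Mdist x y <= Cmod (ca x - ca y) + Cmod (cb x - cb y) + Cmod (cc x - cc y) + Cmod (cd x - cd y).
Proof.
  unfold ca, cb, cc, cd; rewrite <- !toC_sub, <- !Cabs_Cmod; unfold Mdist, Cabs.
  assert (N : forall z, 0 <= Cnorm2 z) by (intros z; unfold Cnorm2; nra).
  pose proof (N (Csub (ma x) (ma y))); pose proof (N (Csub (mb x) (mb y))).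
  pose proof (N (Csub (mc x) (mc y))); pose proof (N (Csub (md x) (md y))).
  eapply Rle_trans; [apply sqrt_plus_le; lra|]; apply Rplus_le_compat_r.
  eapply Rle_trans; [apply sqrt_plus_le; lra|]; apply Rplus_le_compat_r.
  apply sqrt_plus_le; lra.
Qed.

Lemma Mdist_Mid_unipotent (beta gam : C) :
  Mdist Mid (mkMC 1 beta gam 1) <= Cmod beta + Cmod gam.
Proof.
  eapply Rle_trans; [apply Mdist_le|]; simpl_entries.
  replace (1 - 1)%C with (0 : C) by ring; rewrite Cmod_0, !Cmod_0_sub; lra.
Qed.

Lemma not_discrete_of_accumulation (G : Mat -> Prop) x : G x ->
  (forall eps, 0 < eps -> exists y, G y /\ y <> x /\ Mdist x y < eps) -> ~ discrete G.
Proof.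
  intros Gx acc disc; destruct (disc x Gx) as [eps [eps_pos iso]].
  destruct (acc eps eps_pos) as [y [Gy [ne dist]]]; auto.
Qed.

(** * Elementary cases *)

Section Elementary.

Variables (L : C) (h : Mat).
Hypothesis L_neq0 : L <> 0%C.
Hypothesis h_det : detC h = 1%C.
Notation G := (gen2 (diag L) h).

Lemma elementary_of_upper : cc h = 0%C -> elementary G.
Proof.
  intros hc.
  assert (upper : forall x, G x -> cc x = 0%C).
  { apply (gen2_closed _ _ (fun x => cc x = 0%C)); try reflexivity; auto;
      [intros x Hx | intros x y Hx Hy]; simpl_entries; rewrite ?Hx, ?Hy; ring. }
  exists Inf; split; [exact I|]; exists (Inf :: nil); intros x Hx; simpl.
  destruct (Ceq_dec (mc x) Czero) as [_|ne]; [now left|].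
  now destruct ne; apply toC_eq0, upper.
Qed.

Lemma elementary_of_lower : cb h = 0%C -> elementary G.
Proof.
  intros hb.
  assert (lower : forall x, G x -> cb x = 0%C).
  { apply (gen2_closed _ _ (fun x => cb x = 0%C)); try reflexivity; auto;
      [intros x Hx | intros x y Hx Hy]; simpl_entries; rewrite ?Hx, ?Hy; ring. }
  exists (Bd Czero); split; [exact I|]; exists (Bd Czero :: nil); intros x Hx.
  assert (xd : cd x <> 0%C).
  { intros E; apply C1_nz; rewrite <- (gen2_detC _ _ (detC_diag L L_neq0) h_det x Hx).
    unfold detC; rewrite E, (lower x Hx); ring. }
  unfold act; cbv zeta.
  destruct (Ceq_dec (Cadd (Cmul (mc x) Czero) (md x)) Czero) as [E|_].
  - exfalso; apply xd; apply (f_equal toC) in E.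
    now rewrite toC_add, toC_mul, Cmult_0_r, Cplus_0_l in E.
  - left; f_equal; symmetry; apply toC_eq0.
    rewrite toC_div, toC_add, !toC_mul, toC_Czero; fold (cb x); rewrite (lower x Hx).
    rewrite Cmult_0_r, Cplus_0_l; apply Cmult_0_l.
Qed.

Lemma elementary_of_antidiagonal : ca h = 0%C -> cd h = 0%C -> elementary G.
Proof.
  intros ha hd.
  assert (shape : forall x, G x -> (cb x = 0 /\ cc x = 0)%C \/ (ca x = 0 /\ cd x = 0)%C).
  { apply gen2_closed.
    - left; split; reflexivity.
    - left; split; reflexivity.
    - now right.
    - intros x [[Hb Hc] | [Ha Hd]]; [left | right]; simpl_entries;
        rewrite ?Ha, ?Hb, ?Hc, ?Hd; split; ring.
    - intros x y [[H1 H2] | [H1 H2]] [[H3 H4] | [H3 H4]]; [left | right | right | left];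
        simpl_entries; rewrite H1, H2, H3, H4; split; ring. }
  exists Inf; split; [exact I|]; exists (Inf :: Bd Czero :: nil); intros x Hx; simpl.
  destruct (Ceq_dec (mc x) Czero) as [_|ne]; [now left|].
  right; left; f_equal; symmetry; apply toC_eq0; rewrite toC_div.
  destruct (shape x Hx) as [[_ E] | [E _]].
  - now destruct ne; apply toC_eq0.
  - fold (ca x); rewrite E; apply Cmult_0_l.
Qed.

End Elementary.

(** * Parabolic elements *)

Section Parabolic.

Variables g h : Mat.
Hypothesis g_det : detC g = 1%C.
Hypothesis h_det : detC h = 1%C.
Notation G := (gen2 g h).

Lemma gen2_rescale (m : C) f : m <> 0%C -> G (diag m) -> G f -> G (rescale m f).
Proof.
  intros Hm Gm Gf; rewrite <- diag_conj by exact Hm.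
  apply gen2_mul; [now apply gen2_mul | now apply gen2_Minv].
Qed.

Lemma gen2_diag_pow (m : C) n : m <> 0%C -> G (diag m) -> G (diag (m ^ n)%C).
Proof.
  intros Hm Gm; induction n.
  - replace (diag (m ^ 0)%C) with Mid; [constructor|].
    apply Mat_ext; unfold diag; simpl_entries; simpl; field.
  - rewrite diag_Cpow_S by exact Hm; now apply gen2_mul.
Qed.

Lemma not_discrete_of_upper_unipotent (m gam : C) : m <> 0%C -> G (diag m) -> Cmod m < 1 ->
  gam <> 0%C -> G (mkMC 1 gam 0 1) -> ~ discrete G.
Proof.
  intros Hm Gm m_lt1 gam_neq0 Gu; pose proof (Cmod_ge_0 m).
  apply (not_discrete_of_accumulation G Mid); [constructor|]; intros eps eps_pos.
  destruct (exists_pow_mul_lt (Cmod m * Cmod m) (Cmod gam) eps) as [n Hn];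
    [split; nra | exact eps_pos |].
  pose proof (Cpow_nz m n Hm) as mn_neq0.
  exists (mkMC 1 (m ^ n * m ^ n * gam) 0 1); split; [|split].
  - rewrite <- rescale_upper_unipotent; apply gen2_rescale; auto using gen2_diag_pow.
  - intros E; apply (f_equal cb) in E; simpl_entries; revert E.
    repeat apply Cmult_neq_0; auto.
  - eapply Rle_lt_trans; [apply Mdist_Mid_unipotent|].
    rewrite Cmod_0, !Cmod_mult, Cmod_pow, <- Rpow_mult_distr; lra.
Qed.

Lemma not_discrete_of_lower_unipotent (m gam : C) : m <> 0%C -> G (diag m) -> 1 < Cmod m ->
  gam <> 0%C -> G (mkMC 1 0 gam 1) -> ~ discrete G.
Proof.
  intros Hm Gm m_gt1 gam_neq0 Gu.
  apply (not_discrete_of_accumulation G Mid); [constructor|]; intros eps eps_pos.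
  destruct (exists_pow_mul_lt (/ (Cmod m * Cmod m)) (Cmod gam) eps) as [n Hn];
    [split; [apply Rlt_le, Rinv_0_lt_compat | rewrite <- Rinv_1; apply Rinv_lt_contravar]; nra
    | exact eps_pos |].
  pose proof (Cpow_nz m n Hm) as mn_neq0.
  assert (mn2_neq0 : (m ^ n * m ^ n)%C <> 0%C) by now apply Cmult_neq_0.
  exists (mkMC 1 0 (gam / (m ^ n * m ^ n)) 1); split; [|split].
  - rewrite <- rescale_lower_unipotent; apply gen2_rescale; auto using gen2_diag_pow.
  - intros E; apply (f_equal cc) in E; simpl_entries; revert E.
    apply Cmult_neq_0; [exact gam_neq0 | now apply Cinv_neq0].
  - eapply Rle_lt_trans; [apply Mdist_Mid_unipotent|].
    rewrite Cmod_0, Cmod_div, !Cmod_mult, Cmod_pow by exact mn2_neq0.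
    rewrite pow_inv, Rpow_mult_distr in Hn; unfold Rdiv; lra.
Qed.

(* [f] divided by its conjugate under [diag m] is unipotent, and nontrivial as [|m| <> 1]. *)
Lemma not_discrete_of_upper_triangular (m : C) f : m <> 0%C -> G (diag m) -> Cmod m < 1 ->
  G f -> cc f = 0%C -> cb f <> 0%C -> ~ discrete G.
Proof.
  intros Hm Gm m_lt1 Gf fc fb.
  pose proof (gen2_detC g h g_det h_det f Gf) as f_det.
  assert (fd : cd f <> 0%C)
    by (intros E; apply C1_nz; rewrite <- f_det; unfold detC; rewrite E, fc; ring).
  assert (fa : ca f = (/ cd f)%C).
  { rewrite <- (Cmult_1_r (/ cd f)), <- f_det; unfold detC; rewrite fc; field; auto. }
  apply (not_discrete_of_upper_unipotent m (cd f * cb f * (1 - m * m))); auto.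
  - repeat apply Cmult_neq_0; auto.
    apply Cminus_eq_contra, not_eq_sym, Cmul_self_neq1; lra.
  - replace (mkMC 1 _ 0 1) with (Mmul (Minv (rescale m f)) f).
    + apply gen2_mul; auto; apply gen2_Minv, gen2_rescale; auto.
    + apply Mat_ext; simpl_entries; rewrite detC_rescale, f_det by exact Hm;
        unfold rescale; simpl_entries; rewrite ?fc, ?fa; field; auto.
Qed.

Lemma not_discrete_of_lower_triangular (m : C) f : m <> 0%C -> G (diag m) -> 1 < Cmod m ->
  G f -> cb f = 0%C -> cc f <> 0%C -> ~ discrete G.
Proof.
  intros Hm Gm m_gt1 Gf fb fc.
  pose proof (gen2_detC g h g_det h_det f Gf) as f_det.
  assert (fa : ca f <> 0%C)
    by (intros E; apply C1_nz; rewrite <- f_det; unfold detC; rewrite E, fb; ring).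
  assert (fd : cd f = (/ ca f)%C).
  { rewrite <- (Cmult_1_r (/ ca f)), <- f_det; unfold detC; rewrite fb; field; auto. }
  apply (not_discrete_of_lower_unipotent m (ca f * cc f * (1 - / (m * m)))); auto.
  - repeat apply Cmult_neq_0; auto.
    replace (/ (m * m))%C with (/ m * / m)%C by (field; auto).
    apply Cminus_eq_contra, not_eq_sym, Cmul_self_neq1.
    rewrite Cmod_inv by exact Hm; intros E.
    assert (Cmod m = 1) by (rewrite <- (Rinv_inv (Cmod m)), E; apply Rinv_1); lra.
  - replace (mkMC 1 0 _ 1) with (Mmul (Minv (rescale m f)) f).
    + apply gen2_mul; auto; apply gen2_Minv, gen2_rescale; auto.
    + apply Mat_ext; simpl_entries; rewrite detC_rescale, f_det by exact Hm;
        unfold rescale; simpl_entries; rewrite ?fb, ?fd; field; auto.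
Qed.

End Parabolic.

(** * Jørgensen's sequence *)

Fixpoint jorgensen (g h : Mat) (n : nat) : Mat :=
  match n with
  | O => h
  | S k => Mmul (Mmul (jorgensen g h k) g) (Minv (jorgensen g h k))
  end.

Definition offdiag (m : Mat) : C := (cb m * cc m)%C.

Lemma diagonal_product (m : Mat) : detC m = 1%C -> (ca m * cd m)%C = (1 + offdiag m)%C.
Proof. intros Hm; unfold offdiag; rewrite <- Hm; unfold detC; ring. Qed.

Lemma conj_diag (L : C) f : L <> 0%C -> detC f = 1%C ->
  Mmul (Mmul f (diag L)) (Minv f) =
  mkMC (ca f * cd f * L - offdiag f * / L) (- ca f * cb f * (L - / L))
       (cc f * cd f * (L - / L)) (ca f * cd f * / L - offdiag f * L).
Proof.
  intros HL Hf; apply Mat_ext; simpl_entries; rewrite Hf; unfold diag, offdiag; simpl_entries;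
    field; auto.
Qed.

Section Jorgensen.

Variables (L : C) (h : Mat).
Hypothesis L_gt1 : 1 < Cmod L.
Hypothesis h_det : detC h = 1%C.
Local Notation G := (gen2 (diag L) h).
Local Notation hn := (jorgensen (diag L) h).
Local Notation tau := (L - / L)%C.

Let L_neq0 : L <> 0%C := neq0_of_Cmod_gt1 L L_gt1.

Let diag_L_det : detC (diag L) = 1%C := detC_diag L L_neq0.

Lemma gen2_jorgensen n : G (hn n).
Proof.
  induction n; simpl; [constructor|].
  apply gen2_mul; [apply gen2_mul; [exact IHn | constructor] |].
  apply gen2_Minv; auto using diag_L_det.
Qed.

Lemma detC_jorgensen n : detC (hn n) = 1%C.
Proof. apply (gen2_detC (diag L) h); auto using diag_L_det, gen2_jorgensen. Qed.

Lemma jorgensen_S n : hn (S n) =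
  mkMC (L + offdiag (hn n) * tau) (- ca (hn n) * cb (hn n) * tau)
       (cc (hn n) * cd (hn n) * tau) (/ L - offdiag (hn n) * tau).
Proof.
  simpl; rewrite conj_diag by auto using detC_jorgensen.
  rewrite (diagonal_product _ (detC_jorgensen n)); f_equal; field; auto.
Qed.

Lemma offdiag_jorgensen_S n :
  offdiag (hn (S n)) = (- offdiag (hn n) * (1 + offdiag (hn n)) * tau * tau)%C.
Proof.
  rewrite jorgensen_S; unfold offdiag at 1; simpl_entries.
  rewrite <- (diagonal_product _ (detC_jorgensen n)); unfold offdiag; ring.
Qed.

Lemma Cmod_offdiag_jorgensen_1 :
  Cmod (offdiag (hn 1)) = Cmod (ca h * cb h * cc h * cd h) * (Cmod tau * Cmod tau).
Proof.
  rewrite offdiag_jorgensen_S, <- (diagonal_product _ (detC_jorgensen 0)).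
  rewrite <- !Cmod_mult, <- Cmod_opp; f_equal; simpl; unfold offdiag; ring.
Qed.

(* If [ca (hn n)] or [cd (hn n)] vanishes, [hn (S n)] is triangular with a nonzero corner;
   otherwise [offdiag (hn (S n)) <> 0], and the trace [λ + 1/λ] of [hn (S n)] is nonzero. *)
Lemma jorgensen_nondegenerate :
  discrete G -> offdiag h <> 0%C -> ~ (ca h = 0%C /\ cd h = 0%C) ->
  forall n, offdiag (hn n) <> 0%C /\ ~ (ca (hn n) = 0%C /\ cd (hn n) = 0%C).
Proof.
  intros disc x0 ad0; induction n as [|n [xn adn]]; [now split|].
  pose proof (sub_inv_neq0 L L_gt1) as tau_neq0.
  assert (bn : cb (hn n) <> 0%C) by (intros E; apply xn; unfold offdiag; rewrite E; ring).
  assert (cn : cc (hn n) <> 0%C) by (intros E; apply xn; unfold offdiag; rewrite E; ring).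
  destruct (classic (ca (hn n) = 0%C)) as [an | an];
    [| destruct (classic (cd (hn n) = 0%C)) as [dn | dn]].
  - exfalso.
    apply (not_discrete_of_lower_triangular (diag L) h diag_L_det h_det L (hn (S n)));
      auto using gen2_jorgensen; [constructor | |]; rewrite jorgensen_S; simpl_entries.
    + rewrite an; ring.
    + repeat apply Cmult_neq_0; auto; intros E; apply adn; now split.
  - exfalso.
    apply (not_discrete_of_upper_triangular (diag L) h diag_L_det h_det (/ L) (hn (S n)));
      auto using gen2_jorgensen, Cinv_neq0.
    + rewrite <- Minv_diag by exact L_neq0; constructor.
    + rewrite Cmod_inv by exact L_neq0; rewrite <- Rinv_1; apply Rinv_lt_contravar; lra.
    + rewrite jorgensen_S; simpl_entries; rewrite dn; ring.
    + rewrite jorgensen_S; simpl_entries.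
      repeat apply Cmult_neq_0; auto using Copp_neq0.
  - split.
    + rewrite offdiag_jorgensen_S, <- (diagonal_product _ (detC_jorgensen n)).
      repeat apply Cmult_neq_0; auto using Copp_neq0.
    + intros [E1 E2]; apply (add_inv_neq0 L L_gt1).
      rewrite jorgensen_S, ca_mkMC in E1; rewrite jorgensen_S, cd_mkMC in E2.
      replace (L + / L)%C with ((L + offdiag (hn n) * tau) + (/ L - offdiag (hn n) * tau))%C
        by ring.
      rewrite E1, E2; ring.
Qed.

(* Conjugating by [diag m] multiplies [|cb f| / |cc f|] by [|m|^4]; a power of [λ] or [1/λ]
   brings this ratio into [[1/ρ, 1]] with [ρ = |λ|^4]. *)
Lemma exists_balancing_diag f : cb f <> 0%C -> cc f <> 0%C -> exists m : C,
  m <> 0%C /\ G (diag m) /\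
  Cmod (m * m * cb f) <= Cmod (cc f / (m * m)) < Cmod L ^ 4 * Cmod (m * m * cb f).
Proof.
  intros fb fc.
  pose proof (proj1 (Cmod_gt_0 _) fb) as b_pos; pose proof (proj1 (Cmod_gt_0 _) fc) as c_pos.
  set (rho := Cmod L ^ 4); set (q := Cmod (cb f) / Cmod (cc f)).
  assert (balanced : forall m : C, m <> 0%C -> G (diag m) ->
    q * Cmod m ^ 4 <= 1 < rho * (q * Cmod m ^ 4) -> exists m : C, m <> 0%C /\ G (diag m) /\
    Cmod (m * m * cb f) <= Cmod (cc f / (m * m)) < rho * Cmod (m * m * cb f)).
  { intros m Hm Gm Hq; exists m; split; [exact Hm | split; [exact Gm|]].
    pose proof (proj1 (Cmod_gt_0 _) Hm); apply ratio_bracket.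
    - rewrite Cmod_div by now apply Cmult_neq_0.
      apply Rdiv_lt_0_compat; [exact c_pos | rewrite Cmod_mult; nra].
    - replace (Cmod (m * m * cb f) / Cmod (cc f / (m * m))) with (q * Cmod m ^ 4); [exact Hq|].
      rewrite Cmod_div, !Cmod_mult by now apply Cmult_neq_0.
      unfold q; simpl; field; repeat split; lra. }
  destruct (exists_pow_bracket rho q) as [j [Hj | Hj]].
  - assert (1 < Cmod L * Cmod L) by nra; unfold rho; simpl; nra.
  - unfold q; apply Rdiv_lt_0_compat; assumption.
  - apply (balanced (L ^ j)%C);
      [now apply Cpow_nz | apply gen2_diag_pow; auto using diag_L_det; constructor |].
    replace (Cmod (L ^ j) ^ 4) with (rho ^ j); [exact Hj|].
    unfold rho; rewrite Cmod_pow, <- !pow_mult, (Nat.mul_comm j 4); reflexivity.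
  - apply (balanced ((/ L) ^ j)%C); [now apply Cpow_nz, Cinv_neq0 |
      apply gen2_diag_pow; auto using diag_L_det, Cinv_neq0;
        rewrite <- Minv_diag by auto; constructor |].
    replace (Cmod ((/ L) ^ j) ^ 4) with (/ rho ^ j); [exact Hj|].
    unfold rho; rewrite Cmod_pow, Cmod_inv, !pow_inv, <- !pow_mult, (Nat.mul_comm j 4) by auto.
    reflexivity.
Qed.

Lemma not_discrete_of_jorgensen_vanishing :
  (forall n, offdiag (hn n) <> 0%C) ->
  (forall eta, 0 < eta ->
     exists n, Cmod (offdiag (hn n)) < eta /\ Cmod (offdiag (hn (S n))) < eta) ->
  ~ discrete G.
Proof.
  intros nz small.
  set (t := Cmod tau); set (rho := Cmod L ^ 4).
  assert (t_ge0 : 0 <= t) by apply Cmod_ge_0.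
  assert (rho_gt1 : 1 < rho) by (assert (1 < Cmod L * Cmod L) by nra; unfold rho; simpl; nra).
  apply (not_discrete_of_accumulation G (diag L)); [constructor|]; intros eps eps_pos.
  set (eta := eps / (2 * (1 + rho))).
  assert (eta_pos : 0 < eta) by (apply Rdiv_lt_0_compat; lra).
  destruct (small (Rmin (eta * eta) (eps / (4 * (t + 1))))) as [n [xn xSn]].
  { apply Rmin_glb_lt; [nra | apply Rdiv_lt_0_compat; lra]. }
  set (f := hn (S n)) in *.
  assert (fb : cb f <> 0%C)
    by (intros E; apply (nz (S n)); unfold offdiag; fold f; rewrite E; ring).
  assert (fc : cc f <> 0%C)
    by (intros E; apply (nz (S n)); unfold offdiag; fold f; rewrite E; ring).
  destruct (exists_balancing_diag f fb fc) as [m [m_neq0 [Gm bal]]].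
  exists (rescale m f); split; [|split].
  - apply gen2_rescale; auto using diag_L_det; apply gen2_jorgensen.
  - intros E; apply (f_equal cb) in E; unfold rescale, diag in E; rewrite !cb_mkMC in E.
    revert E; repeat apply Cmult_neq_0; auto.
  - assert (fa : ca f = (L + offdiag (hn n) * tau)%C)
      by (unfold f; rewrite jorgensen_S; apply ca_mkMC).
    assert (fd : cd f = (/ L - offdiag (hn n) * tau)%C)
      by (unfold f; rewrite jorgensen_S; apply cd_mkMC).
    eapply Rle_lt_trans; [apply Mdist_le|]; unfold rescale, diag; simpl_entries.
    rewrite fa, fd, !Cmod_0_sub.
    replace (L - (L + offdiag (hn n) * tau))%C with (- (offdiag (hn n) * tau))%C by ring.
    replace (/ L - (/ L - offdiag (hn n) * tau))%C with (offdiag (hn n) * tau)%C by ring.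
    rewrite Cmod_opp, Cmod_mult; fold t.
    assert (pq : Cmod (m * m * cb f) * Cmod (cc f / (m * m)) = Cmod (offdiag f)).
    { rewrite <- Cmod_mult; unfold offdiag; f_equal; field; auto. }
    pose proof (balanced_sum_lt _ _ rho eta (Cmod_ge_0 _) bal ltac:(lra) eta_pos
      ltac:(rewrite pq; eapply Rlt_le_trans; [exact xSn | apply Rmin_l])) as sum_lt.
    assert (xt : Cmod (offdiag (hn n)) * t <= eps / (4 * (t + 1)) * t).
    { apply Rmult_le_compat_r; [exact t_ge0 | apply Rlt_le, (Rlt_le_trans _ _ _ xn), Rmin_r]. }
    assert (eps / (4 * (t + 1)) * t < eps / 4)
      by (apply Rmult_lt_reg_r with (4 * (t + 1)); [lra | field_simplify; nra]).
    unfold eta in sum_lt; field_simplify in sum_lt; lra.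
Qed.

Lemma not_discrete_of_jorgensen_contraction :
  offdiag h <> 0%C -> ~ (ca h = 0%C /\ cd h = 0%C) ->
  Cmod tau * Cmod tau * (1 + Cmod (offdiag (hn 1))) < 1 -> ~ discrete G.
Proof.
  intros x0 ad0 contraction disc.
  pose proof (jorgensen_nondegenerate disc x0 ad0) as nondeg.
  set (y k := Cmod (offdiag (hn (S k)))).
  set (r := Cmod tau * Cmod tau * (1 + y O)).
  assert (r_bounds : 0 <= r < 1) by (split; [unfold r, y; pose proof (Cmod_ge_0 tau);
    pose proof (Cmod_ge_0 (offdiag (hn 1))); nra | exact contraction]).
  assert (decay : forall k, y k <= r ^ k * y O).
  { apply quadratic_recursion_decay;
      [intros k; apply Cmod_ge_0 | | apply Rle_0_sqr | exact contraction].
    intros k; unfold y; rewrite offdiag_jorgensen_S, !Cmod_mult, Cmod_opp.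
    pose proof (Cmod_triangle 1 (offdiag (hn (S k)))) as tri; rewrite Cmod_1 in tri.
    pose proof (Cmod_ge_0 (offdiag (hn (S k)))); pose proof (Cmod_ge_0 tau).
    assert (0 <= Cmod tau * Cmod tau) by nra.
    assert (Cmod (offdiag (hn (S k))) * Cmod (1 + offdiag (hn (S k))) <=
            Cmod (offdiag (hn (S k))) * (1 + Cmod (offdiag (hn (S k)))))
      by (apply Rmult_le_compat_l; lra).
    nra. }
  revert disc; apply not_discrete_of_jorgensen_vanishing; [intros n; apply nondeg|].
  intros eta eta_pos; destruct (exists_pow_mul_lt r (y O) eta r_bounds eta_pos) as [n Hn].
  exists (S n); split; [apply (Rle_lt_trans _ _ _ (decay n) Hn)|].
  apply (Rle_lt_trans _ _ _ (decay (S n))); simpl.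
  pose proof (Cmod_ge_0 (offdiag (hn 1))); pose proof (pow_le r n (proj1 r_bounds)).
  assert (0 <= r ^ n * y O) by (apply Rmult_le_pos; auto).
  nra.
Qed.

End Jorgensen.

Theorem theorem2 (lam a b c d : Cx) :
  1 < Cabs lam ->
  Mdet (mkM a b c d) = Cone ->
  let g := mkM lam Czero Czero (Cinv lam) in
  let h := mkM a b c d in
  let Mg := Cabs (Csub lam Cone) + Cabs (Csub (Cinv lam) Cone) in
  Mg < 1 ->
  sqrt (Cabs (Cmul (Cmul (Cmul a b) c) d)) <= (1 - Mg) / (Mg * Mg) ->
  elementary (gen2 g h) \/ ~ discrete (gen2 g h).
Proof.
  intros lam_gt1 h_det g h Mg Mg_lt1 abcd_small.
  set (L := toC lam) in *; rewrite Cabs_Cmod in lam_gt1.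
  assert (g_diag : g = diag L).
  { apply Mat_ext; unfold diag; simpl_entries; try reflexivity; apply toC_inv. }
  assert (h_detC : detC h = 1%C) by (unfold h; rewrite <- detC_Mdet, h_det; reflexivity).
  rewrite g_diag; pose proof (neq0_of_Cmod_gt1 L lam_gt1) as L_neq0.
  destruct (classic (toC c = 0%C)) as [c0 | c0]; [left; now apply elementary_of_upper|].
  destruct (classic (toC b = 0%C)) as [b0 | b0]; [left; now apply elementary_of_lower|].
  destruct (classic (toC a = 0%C /\ toC d = 0%C)) as [[a0 d0] | ad0];
    [left; now apply elementary_of_antidiagonal|].
  right; apply not_discrete_of_jorgensen_contraction; auto.
  - now apply Cmult_neq_0.
  - rewrite Cmod_offdiag_jorgensen_1 by assumption.
    rewrite Cabs_Cmod, !toC_mul in abcd_small.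
    change (sqrt (Cmod (ca h * cb h * cc h * cd h)) <= (1 - Mg) / (Mg * Mg)) in abcd_small.
    rewrite <- (sqrt_sqrt _ (Cmod_ge_0 (ca h * cb h * cc h * cd h))).
    apply contraction_bound with Mg; auto using sqrt_pos.
    split; [apply Cmod_gt_0, sub_inv_neq0; exact lam_gt1 |].
    unfold Mg; rewrite !Cabs_Cmod, !toC_sub, toC_inv; apply Cmod_sub_le_sub1.
Qed.
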